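(* Let $N>0$ and $\tau\in(0,1)$. There exists a constant $C=C(\tau,N)>0$, depending only on $\tau$ and $N$, such that every radial solution $(v_1,v_2)$ of $(P)_\tau$ (as described in the context) satisfies $$v_1(r)+2(N+1)\log r\le C\quad\text{and}\quad v_2(r)+2\log r\le C\qquad\text{for all } r>0.$$
   Context: A radial solution of $(P)_\tau$ is a pair $v_1,v_2\in C([0,\infty))\cap C^2((0,\infty))$ with, for $r>0$, $$-(rv_1')'=r^{2N+1}e^{v_1}-\tau re^{v_2},\qquad -(rv_2')'=re^{v_2}-\tau r^{2N+1}e^{v_1},$$ $v_1'(0)=v_2'(0)=0$, $$\beta_1=\int_0^\infty r^{2N+1}e^{v_1}\,dr<\infty,\qquad \beta_2=\int_0^\infty re^{v_2}\,dr<\infty,$$ and $\lim_{r\to\infty}rv_1'(r)=-(\beta_1-\tau\beta_2)$, $\lim_{r\to\infty}rv_2'(r)=-(\beta_2-\tau\beta_1)$. *)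

From Stdlib Require Import Reals.
From Coquelicot Require Import Coquelicot.
Open Scope R_scope.

(* v belongs to C([0,oo)) /\ C^2((0,oo)) and v'(0) = 0 (one-sided derivative
   at 0, since v is only defined on [0,oo)). Values of v on (-oo,0) are
   irrelevant. *)
Definition radial_regular (v : R -> R) : Prop :=
  filterlim v (at_right 0) (locally (v 0)) /\
  (forall r, 0 < r ->
     ex_derive v r /\ ex_derive (Derive v) r /\ continuous (Derive_n v 2) r) /\
  filterlim (fun h => (v h - v 0) / h) (at_right 0) (locally 0).

Definition wgt (N r : R) : R := Rpower r (2 * N + 1).

Definition radial_solution (N tau : R) (v1 v2 : R -> R) (beta1 beta2 : R) : Prop :=
  radial_regular v1 /\ radial_regular v2 /\
  (forall r, 0 < r ->
     is_derive (fun s => s * Derive v1 s) r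
       (- (wgt N r * exp (v1 r) - tau * r * exp (v2 r)))) /\
  (forall r, 0 < r ->
     is_derive (fun s => s * Derive v2 s) r
       (- (r * exp (v2 r) - tau * wgt N r * exp (v1 r)))) /\
  is_RInt_gen (fun r => wgt N r * exp (v1 r)) (at_right 0) (Rbar_locally p_infty) beta1 /\
  is_RInt_gen (fun r => r * exp (v2 r)) (at_right 0) (Rbar_locally p_infty) beta2 /\
  is_lim (fun r => r * Derive v1 r) p_infty (- (beta1 - tau * beta2)) /\
  is_lim (fun r => r * Derive v2 r) p_infty (- (beta2 - tau * beta1)).

From Stdlib Require Import Reals Lra.
From Coquelicot Require Import Coquelicot.
Open Scope R_scope.

(* With t = ln r, w1 = v1 + 2(N+1) ln r and w2 = v2 + 2 ln r, the system becomes
   the autonomous system w1'' = -(e^w1 - tau e^w2), w2'' = -(e^w2 - tau e^w1), i.e.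
   w'' = -A grad(e^w1 + e^w2) with A = [[1, -tau], [-tau, 1]].  Hence the energy
   (1/2) w'.A^-1 w' + e^w1 + e^w2, where w1' = r v1' + 2(N+1) and w2' = r v2' + 2,
   is constant in r; for 0 < tau < 1 its kinetic part is nonnegative, so the energy
   dominates e^w1 and e^w2.  Its value is read off near r = 0: the derivative of
   r v_i' is bounded there and v_i is continuous at 0, which forces r v_i' -> 0,
   while w_i -> -oo.  So the energy is bounded in terms of N and tau only. *)

Lemma exp_le x y : x <= y -> exp x <= exp y.
Proof.
intros Hxy. destruct (Rle_lt_or_eq_dec _ _ Hxy) as [Hlt | ->]; [|lra].
left. apply exp_increasing, Hlt.
Qed.

Lemma is_derive_0_const_pos (f : R -> R) r s :
  (forall t, 0 < t -> is_derive f t 0) -> 0 < r -> 0 < s -> f r = f s.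
Proof.
intros Hf Hr Hs.
destruct (Rtotal_order r s) as [Hlt | [-> | Hgt]]; [| reflexivity |].
- apply eq_is_derive; [intros t Ht; apply Hf; lra | exact Hlt].
- symmetry. apply eq_is_derive; [intros t Ht; apply Hf; lra | exact Hgt].
Qed.

Lemma at_right_0_iff (P : R -> Prop) :
  at_right 0 P <-> exists d, 0 < d /\ forall x, 0 < x < d -> P x.
Proof.
assert (Hball : forall (d : posreal) x, 0 < x -> ball 0 d x <-> x < d).
{ intros d x Hx. change (Rabs (x - 0) < d <-> x < d).
  rewrite Rminus_0_r, Rabs_pos_eq by lra. tauto. }
split.
- intros [d Hd]. exists d. split; [apply cond_pos|].
  intros x [Hx0 Hxd]. apply Hd; [apply Hball|]; assumption.
- intros [d [Hd HP]]. exists (mkposreal d Hd). intros x Hx Hx0.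
  apply HP. split; [exact Hx0|]. exact (proj1 (Hball (mkposreal d Hd) x Hx0) Hx).
Qed.

Lemma at_right_0_pos : at_right 0 (fun x => 0 < x).
Proof. apply at_right_0_iff. exists 1. split; [lra | tauto]. Qed.

Lemma at_right_0_Rabs_sub_lt (v : R -> R) l e :
  0 < e -> filterlim v (at_right 0) (locally l) -> at_right 0 (fun x => Rabs (v x - l) < e).
Proof. intros He Hv. exact (proj1 (filterlim_locally v l) Hv (mkposreal e He)). Qed.

Lemma at_right_0_add_mul_ln_le (v : R -> R) a L :
  0 < a -> filterlim v (at_right 0) (locally (v 0)) ->
  at_right 0 (fun h => v h + a * ln h <= L).
Proof.
intros Ha Hv.
set (K := (L - v 0 - 1) / a).
assert (Hln : at_right 0 (fun h => ln h < K)).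
{ exact (is_lim_ln_0 (fun y => y < K) (ex_intro _ K (fun y Hy => Hy))). }
generalize (filter_and _ _ (at_right_0_Rabs_sub_lt v (v 0) 1 Rlt_0_1 Hv) Hln).
apply filter_imp. intros h [Hvh Hlnh].
destruct (Rabs_def2 _ _ Hvh) as [Hvh_up _].
assert (Hmul : a * ln h < a * K) by (apply Rmult_lt_compat_l; assumption).
replace (a * K) with (L - v 0 - 1) in Hmul by (unfold K; field; lra).
lra.
Qed.

Lemma exists_small_euler_derivative (v : R -> R) h e :
  0 < h -> (forall x, 0 < x -> ex_derive v x) -> Rabs (v (h / 2) - v h) <= e ->
  exists c, Rabs (c - h) <= h / 2 /\ Rabs (c * Derive v c) <= 3 * e.
Proof.
intros Hh Hv Hosc.
assert (Hd : forall c, Rabs (c - h) <= h / 2 -> is_derive v c (Derive v c)).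
{ intros c Hc. apply Derive_correct, Hv. apply Rabs_le_between' in Hc. lra. }
assert (Hhalf : h / 2 - h = - (h / 2)) by field.
assert (Hb : Rabs (h / 2 - h) <= h / 2) by (rewrite Hhalf, Rabs_Ropp, Rabs_pos_eq; lra).
destruct (MVT_cor4 v (Derive v) h (h / 2) Hd (h / 2) Hb) as [c [Hc Hch]].
rewrite Hhalf, Rabs_Ropp, (Rabs_pos_eq (h / 2)) in Hch by lra.
exists c. split; [exact Hch|].
apply Rabs_le_between' in Hch.
rewrite Hc, Hhalf, Rabs_mult, Rabs_Ropp, (Rabs_pos_eq (h / 2)) in Hosc by lra.
rewrite Rabs_mult, (Rabs_pos_eq c) by lra.
pose proof (Rabs_pos (Derive v c)). nra.
Qed.

Lemma at_right_0_Rabs_euler_derivative_le (v g : R -> R) M e :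
  0 < e -> filterlim v (at_right 0) (locally (v 0)) -> (forall x, 0 < x -> ex_derive v x) ->
  at_right 0 (fun x => is_derive (fun s => s * Derive v s) x (g x) /\ Rabs (g x) <= M) ->
  at_right 0 (fun h => Rabs (h * Derive v h) <= e).
Proof.
intros He Hv Hdv Hg.
apply at_right_0_iff in Hg as [d1 [Hd1 Hg]].
destruct (proj1 (at_right_0_iff _) (at_right_0_Rabs_sub_lt v (v 0) (e / 12) ltac:(lra) Hv))
  as [d2 [Hd2 Hosc]].
apply at_right_0_iff.
exists (Rmin (Rmin d1 d2 / 2) (e / (Rabs M + 1))).
pose proof (Rabs_pos M) as HM.
split.
{ pose proof (Rmin_glb_lt d1 d2 0 Hd1 Hd2).
  apply Rmin_glb_lt; [lra | apply Rdiv_lt_0_compat; lra]. }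
intros h [Hh Hhd].
assert (Hh1 : h < d1 / 2 /\ h < d2 / 2).
{ pose proof (Rmin_l (Rmin d1 d2 / 2) (e / (Rabs M + 1))).
  pose proof (Rmin_l d1 d2). pose proof (Rmin_r d1 d2). lra. }
assert (HhM : h * (Rabs M + 1) < e).
{ assert (Hh2 : h < e / (Rabs M + 1))
    by (eapply Rlt_le_trans; [exact Hhd | apply Rmin_r]).
  apply (Rmult_lt_compat_r (Rabs M + 1)) in Hh2; [|lra].
  replace (e / (Rabs M + 1) * (Rabs M + 1)) with e in Hh2 by (field; lra). lra. }
assert (Hosc_h : Rabs (v (h / 2) - v h) <= e / 6).
{ pose proof (Hosc (h / 2) ltac:(lra)). pose proof (Hosc h ltac:(lra)).
  replace (v (h / 2) - v h) with ((v (h / 2) - v 0) - (v h - v 0)) by ring.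
  eapply Rle_trans; [apply Rabs_triang|]. rewrite Rabs_Ropp. lra. }
destruct (exists_small_euler_derivative v h (e / 6) Hh Hdv Hosc_h) as [c [Hch Hc]].
assert (Hvar : Rabs (c * Derive v c - h * Derive v h) <= M * Rabs (c - h)).
{ apply (bounded_variation (fun s => s * Derive v s) g M h c). intros t Ht.
  apply Hg. pose proof (proj1 (Rabs_le_between' _ _ _) (Rle_trans _ _ _ Ht Hch)). lra. }
replace (h * Derive v h) with (c * Derive v c - (c * Derive v c - h * Derive v h)) by ring.
eapply Rle_trans; [apply Rabs_triang|]. rewrite Rabs_Ropp.
assert (HMch : M * Rabs (c - h) <= Rabs M * (h / 2)).
{ apply Rmult_le_compat; [| apply Rabs_pos | apply Rle_abs | exact Hch].
  pose proof (Rabs_pos (g h)). pose proof (Hg h ltac:(lra)). lra. }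
lra.
Qed.

Lemma wgt_bounds N x : 0 <= 2 * N + 1 -> 0 < x <= 1 -> 0 <= wgt N x <= 1.
Proof.
intros HN Hx. unfold wgt. split; [left; apply exp_pos|].
replace 1 with (Rpower 1 (2 * N + 1)) at 2
  by (unfold Rpower; rewrite ln_1, Rmult_0_r; apply exp_0).
apply Rle_Rpower_l; assumption.
Qed.

Lemma Rabs_mul_exp_sub_le k1 k2 u1 u2 U1 U2 :
  0 <= k1 <= 1 -> 0 <= k2 <= 1 -> u1 <= U1 -> u2 <= U2 ->
  Rabs (k1 * exp u1 - k2 * exp u2) <= exp U1 + exp U2.
Proof.
intros Hk1 Hk2 Hu1 Hu2.
pose proof (exp_le _ _ Hu1). pose proof (exp_le _ _ Hu2).
pose proof (exp_pos u1). pose proof (exp_pos u2).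
apply Rabs_le. nra.
Qed.

Lemma Derive_mul_id_Derive (v : R -> R) (r : R) :
  ex_derive (Derive v) r ->
  Derive (fun s => s * Derive v s) r = Derive v r + r * Derive (Derive v) r.
Proof.
intros Hv. apply is_derive_unique.
auto_derive; [exact Hv | rewrite !Rmult_1_l; reflexivity].
Qed.

Definition quad (tau x y : R) : R := x ^ 2 + 2 * tau * x * y + y ^ 2.

Lemma quad_nonneg tau x y : -1 <= tau <= 1 -> 0 <= quad tau x y.
Proof.
intros Htau. unfold quad.
assert (0 <= (1 - tau ^ 2) * y ^ 2) by (apply Rmult_le_pos; nra).
pose proof (pow2_ge_0 (x + tau * y)). nra.
Qed.

Lemma quad_le tau x y a b :
  0 <= tau -> Rabs x <= a -> Rabs y <= b -> quad tau x y <= quad tau a b.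
Proof.
intros Htau Hx Hy. unfold quad.
rewrite <- (pow2_abs x), <- (pow2_abs y).
assert (x * y <= Rabs x * Rabs y) by (rewrite <- Rabs_mult; apply Rle_abs).
pose proof (Rabs_pos x). pose proof (Rabs_pos y).
assert (Rabs x * Rabs y <= a * b) by (apply Rmult_le_compat; assumption).
assert (tau * (x * y) <= tau * (a * b)) by (apply Rmult_le_compat_l; lra).
nra.
Qed.

Definition energy (N tau : R) (v1 v2 : R -> R) (s : R) : R :=
  quad tau (s * Derive v1 s + 2 * (N + 1)) (s * Derive v2 s + 2) / (2 * (1 - tau ^ 2))
  + exp (v1 s + 2 * (N + 1) * ln s) + exp (v2 s + 2 * ln s).

Definition energy_bound (N tau : R) : R := quad tau (2 * N + 3) 3 / (2 * (1 - tau ^ 2)) + 2.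

Lemma exp_le_energy N tau v1 v2 r :
  -1 < tau < 1 ->
  exp (v1 r + 2 * (N + 1) * ln r) <= energy N tau v1 v2 r /\
  exp (v2 r + 2 * ln r) <= energy N tau v1 v2 r.
Proof.
intros Htau. unfold energy.
assert (0 <= quad tau (r * Derive v1 r + 2 * (N + 1)) (r * Derive v2 r + 2)
             / (2 * (1 - tau ^ 2))).
{ apply Rdiv_le_0_compat; [apply quad_nonneg; lra | nra]. }
pose proof (exp_pos (v1 r + 2 * (N + 1) * ln r)). pose proof (exp_pos (v2 r + 2 * ln r)).
lra.
Qed.

Lemma energy_le_bound N tau v1 v2 h :
  0 <= N + 1 -> 0 <= tau < 1 ->
  Rabs (h * Derive v1 h) <= 1 -> Rabs (h * Derive v2 h) <= 1 ->
  v1 h + 2 * (N + 1) * ln h <= 0 -> v2 h + 2 * ln h <= 0 ->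
  energy N tau v1 v2 h <= energy_bound N tau.
Proof.
intros HN Htau Hp1 Hp2 Hw1 Hw2. unfold energy, energy_bound.
assert (Hq : quad tau (h * Derive v1 h + 2 * (N + 1)) (h * Derive v2 h + 2)
             <= quad tau (2 * N + 3) 3).
{ apply quad_le; [lra | |]; (eapply Rle_trans; [apply Rabs_triang|]).
  - rewrite (Rabs_pos_eq (2 * (N + 1))); lra.
  - rewrite (Rabs_pos_eq 2); lra. }
assert (/ (2 * (1 - tau ^ 2)) > 0) by (apply Rinv_0_lt_compat; nra).
pose proof (exp_le _ _ Hw1). pose proof (exp_le _ _ Hw2). rewrite exp_0 in *.
unfold Rdiv. nra.
Qed.

Section RadialSolution.

Variables (N tau : R) (v1 v2 : R -> R) (beta1 beta2 : R).
Hypothesis hN : 0 < N.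
Hypothesis htau : 0 < tau < 1.
Hypothesis hsol : radial_solution N tau v1 v2 beta1 beta2.

Let f1 (r : R) : R := wgt N r * exp (v1 r) - tau * r * exp (v2 r).
Let f2 (r : R) : R := r * exp (v2 r) - tau * wgt N r * exp (v1 r).

Lemma radial_solution_is_derive_energy r : 0 < r -> is_derive (energy N tau v1 v2) r 0.
Proof.
intros hr.
destruct hsol as [[_ [D1 _]] [[_ [D2 _]] [O1 [O2 _]]]].
destruct (D1 r hr) as [dv1 [ddv1 _]]. destruct (D2 r hr) as [dv2 [ddv2 _]].
assert (Hdd1 : Derive (Derive v1) r = (- f1 r - Derive v1 r) / r).
{ pose proof (is_derive_unique _ _ _ (O1 r hr)) as Hp.
  change (Derive (fun s : R => s * Derive v1 s) r = - f1 r) in Hp.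
  rewrite Derive_mul_id_Derive in Hp by exact ddv1.
  rewrite <- Hp. field. lra. }
assert (Hdd2 : Derive (Derive v2) r = (- f2 r - Derive v2 r) / r).
{ pose proof (is_derive_unique _ _ _ (O2 r hr)) as Hp.
  change (Derive (fun s : R => s * Derive v2 s) r = - f2 r) in Hp.
  rewrite Derive_mul_id_Derive in Hp by exact ddv2.
  rewrite <- Hp. field. lra. }
assert (Hw1 : exp (v1 r + 2 * (N + 1) * ln r) = r * (wgt N r * exp (v1 r))).
{ unfold wgt, Rpower.
  replace (v1 r + 2 * (N + 1) * ln r) with (ln r + ((2 * N + 1) * ln r + v1 r)) by ring.
  rewrite !exp_plus, exp_ln by exact hr. reflexivity. }
assert (Hw2 : exp (v2 r + 2 * ln r) = r * (r * exp (v2 r))).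
{ replace (v2 r + 2 * ln r) with (ln r + (ln r + v2 r)) by ring.
  rewrite !exp_plus, exp_ln by exact hr. reflexivity. }
unfold energy, quad. auto_derive.
- repeat split; assumption.
- change (Derive (fun x => Derive v1 x) r) with (Derive (Derive v1) r).
  change (Derive (fun x => Derive v2 x) r) with (Derive (Derive v2) r).
  change (Derive (fun x => v1 x) r) with (Derive v1 r).
  change (Derive (fun x => v2 x) r) with (Derive v2 r).
  rewrite Hdd1, Hdd2, Hw1, Hw2. unfold f1, f2. field. split; [lra | nra].
Qed.

Lemma radial_solution_euler_derivative_bounded :
  at_right 0 (fun x => is_derive (fun s => s * Derive v1 s) x (- f1 x) /\
                       Rabs (- f1 x) <= exp (v1 0 + 1) + exp (v2 0 + 1)) /\
  at_right 0 (fun x => is_derive (fun s => s * Derive v2 s) x (- f2 x) /\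
                       Rabs (- f2 x) <= exp (v1 0 + 1) + exp (v2 0 + 1)).
Proof.
destruct hsol as [[C1 _] [[C2 _] [O1 [O2 _]]]].
destruct (proj1 (at_right_0_iff _) (at_right_0_Rabs_sub_lt v1 (v1 0) 1 Rlt_0_1 C1))
  as [d1 [Hd1 B1]].
destruct (proj1 (at_right_0_iff _) (at_right_0_Rabs_sub_lt v2 (v2 0) 1 Rlt_0_1 C2))
  as [d2 [Hd2 B2]].
assert (Hnear : at_right 0 (fun x =>
  0 < x <= 1 /\ 0 <= wgt N x <= 1 /\ v1 x <= v1 0 + 1 /\ v2 x <= v2 0 + 1)).
{ apply at_right_0_iff. exists (Rmin (Rmin d1 d2) 1).
  split; [apply Rmin_glb_lt; [apply Rmin_glb_lt|]; lra|].
  intros x [Hx Hxd].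
  pose proof (Rmin_l (Rmin d1 d2) 1). pose proof (Rmin_r (Rmin d1 d2) 1).
  pose proof (Rmin_l d1 d2). pose proof (Rmin_r d1 d2).
  destruct (Rabs_def2 _ _ (B1 x ltac:(lra))). destruct (Rabs_def2 _ _ (B2 x ltac:(lra))).
  split; [lra|]. split; [apply wgt_bounds; lra | lra]. }
split; generalize Hnear; apply filter_imp; intros x [Hx [Hw [Hv1 Hv2]]];
  rewrite Rabs_Ropp; unfold f1, f2.
- split; [apply O1; lra|]. apply Rabs_mul_exp_sub_le; nra.
- split; [apply O2; lra|]. rewrite Rplus_comm. apply Rabs_mul_exp_sub_le; nra.
Qed.

Lemma radial_solution_near_0 :
  exists h, 0 < h /\ Rabs (h * Derive v1 h) <= 1 /\ Rabs (h * Derive v2 h) <= 1 /\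
    v1 h + 2 * (N + 1) * ln h <= 0 /\ v2 h + 2 * ln h <= 0.
Proof.
destruct hsol as [[C1 [D1 _]] [[C2 [D2 _]] _]].
destruct radial_solution_euler_derivative_bounded as [B1 B2].
assert (S1 := at_right_0_Rabs_euler_derivative_le v1 _ _ 1 Rlt_0_1 C1
  (fun x Hx => proj1 (D1 x Hx)) B1).
assert (S2 := at_right_0_Rabs_euler_derivative_le v2 _ _ 1 Rlt_0_1 C2
  (fun x Hx => proj1 (D2 x Hx)) B2).
assert (W1 := at_right_0_add_mul_ln_le v1 (2 * (N + 1)) 0 ltac:(lra) C1).
assert (W2 := at_right_0_add_mul_ln_le v2 2 0 ltac:(lra) C2).
exact (filter_ex _ (filter_and _ _ at_right_0_pos
  (filter_and _ _ S1 (filter_and _ _ S2 (filter_and _ _ W1 W2))))).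
Qed.

End RadialSolution.

Theorem mainTheorem10 (N tau : R) (hN : 0 < N) (htau : 0 < tau < 1) :
  exists C : R, 0 < C /\
    forall (v1 v2 : R -> R) (beta1 beta2 : R),
      radial_solution N tau v1 v2 beta1 beta2 ->
      forall r : R, 0 < r ->
        v1 r + 2 * (N + 1) * ln r <= C /\ v2 r + 2 * ln r <= C.
Proof.
assert (HK : 1 < energy_bound N tau).
{ unfold energy_bound.
  assert (0 <= quad tau (2 * N + 3) 3 / (2 * (1 - tau ^ 2)))
    by (apply Rdiv_le_0_compat; [apply quad_nonneg; lra | nra]).
  lra. }
exists (ln (energy_bound N tau)).
split; [rewrite <- ln_1; apply ln_increasing; lra|].
intros v1 v2 beta1 beta2 Hsol r hr.
destruct (radial_solution_near_0 N tau v1 v2 beta1 beta2 hN htau Hsol)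
  as [h [hh [Hp1 [Hp2 [Hw1 Hw2]]]]].
assert (HE : energy N tau v1 v2 r <= energy_bound N tau).
{ rewrite (is_derive_0_const_pos _ r h
    (radial_solution_is_derive_energy N tau v1 v2 beta1 beta2 htau Hsol) hr hh).
  apply energy_le_bound; lra || assumption. }
destruct (exp_le_energy N tau v1 v2 r ltac:(lra)) as [E1 E2].
split.
- rewrite <- (ln_exp (v1 r + 2 * (N + 1) * ln r)). apply ln_le; [apply exp_pos | lra].
- rewrite <- (ln_exp (v2 r + 2 * ln r)). apply ln_le; [apply exp_pos | lra].
Qed.
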